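(* Let $p$ be a prime, $q$ a power of $p$, $n\ge1$ odd, $m=\frac{q^n+1}{q+1}$, and let $G\le B(Q_\infty)$ be a subgroup. Put $G_0=\pi_d(G)$, $G_1=\pi_a(G)$, $g_0=\#G_0$, $g_1=\#G_1$. Then $G_1=G_0^m=\{d^m: d\in G_0\}$ and $g_1=\frac{g_0}{\gcd(g_0,m)}$.
   Context: Let $\mathcal C_n=\mathbb{F}_{q^{2n}}(x,y,z)$ be the function field defined by $x^q+x=y^{q+1}$ and $z^m=y^{q^2}-y$. Let $B(Q_\infty)$ be the group of automorphisms $[a,b,c,d]$ of $\mathcal C_n$ given by $x\mapsto a^{q+1}x+ab^qy+c$, $y\mapsto ay+b$, $z\mapsto dz$, where $a\in\mathbb{F}_{q^2}^*$, $b,c\in\mathbb{F}_{q^2}$, $c^q+c=b^{q+1}$, $d\in\mathbb{F}_{q^{2n}}$, $d^m=a$; its group law is $[a',b',c',d']\circ[a,b,c,d]=[a'a,ab'+b,a^{q+1}c'+ab^qb'+c,d'd]$. Define the homomorphisms $\pi_d:[a,b,c,d]\mapsto d$ and $\pi_a:[a,b,c,d]\mapsto a$. All $d$ occurring lie in the cyclic group $\mu$ of $(q^n+1)(q-1)$-th roots of unity in $\mathbb{F}_{q^{2n}}^*$. *)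

From HB Require Import structures.
From mathcomp Require Import all_boot all_order all_algebra all_fingroup all_field.
Set Implicit Arguments. Unset Strict Implicit. Unset Printing Implicit Defensive.
Import GRing.Theory.
Local Open Scope ring_scope.

(* Elements [a,b,c,d] of B(Q_infty) are encoded as tuples ((a,b,c),d) : F*F*F*F,
   where F is the field F_{q^{2n}}; F_{q^2} is the subfield {x | x^(q^2) = x}. *)
Definition quad (F : Type) := (F * F * F * F)%type.

Definition inB (F : fieldType) (q m : nat) (t : quad F) : bool :=
  let: (a, b, c, d) := t in
  [&& a != 0, a ^+ (q ^ 2) == a, b ^+ (q ^ 2) == b, c ^+ (q ^ 2) == c,
      c ^+ q + c == b ^+ q.+1 & d ^+ m == a].

Definition compB (F : fieldType) (q : nat) (t' t : quad F) : quad F :=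
  let: (a', b', c', d') := t' in
  let: (a, b, c, d) := t in
  (a' * a, a * b' + b, a ^+ q.+1 * c' + a * b ^+ q * b' + c, d' * d).

Definition idB (F : fieldType) : quad F := (1, 0, 0, 1).

Definition isBsubgroup (F : finFieldType) (q m : nat) (G : {set quad F}) : Prop :=
  [/\ forall t, t \in G -> inB q m t,
      idB F \in G,
      forall s t, s \in G -> t \in G -> compB q s t \in G &
      forall t, t \in G -> exists2 s, s \in G & compB q s t = idB F].

Definition pi_d (F : Type) (t : quad F) : F := t.2.
Definition pi_a (F : Type) (t : quad F) : F := t.1.1.1.

(* Every element of a subgroup G of B(Q_infty) satisfies a = d^m, so pi_a = (pi_d)^m
   on G and G1 is the image of G0 under x |-> x^m.  Since pi_d is multiplicative, G0
   is a finite subgroup of the unit group of F, hence cyclic, and the m-th power map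
   on a cyclic group of order g0 has image of order g0 / gcd(g0, m). *)
From HB Require Import structures.
From mathcomp Require Import all_boot all_order all_algebra all_fingroup all_field.
From mathcomp Require Import all_solvable.
Set Implicit Arguments. Unset Strict Implicit. Unset Printing Implicit Defensive.
Import GRing.Theory.
Local Open Scope ring_scope.

Lemma image_expg_cycle (gT : finGroupType) (z : gT) m :
  [set (u ^+ m)%g | u in <[z]>%g] = <[(z ^+ m)%g]>%g.
Proof.
apply/setP=> y; apply/imsetP/cycleP.
  by case=> u /cycleP [i ->] ->; exists i; rewrite -!expgM mulnC.
by case=> i ->; exists (z ^+ i)%g; [apply/cycleP; exists i | rewrite -!expgM mulnC].
Qed.

Lemma card_image_expg_cyclic (gT : finGroupType) (G : {group gT}) m :
  cyclic G -> #|[set (x ^+ m)%g | x in G]| = (#|G| %/ gcdn #|G| m)%N.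
Proof.
by case/cyclicP=> z ->; rewrite image_expg_cycle -!orderE orderXgcd.
Qed.

Lemma card_image_expr (F : finFieldType) (S : {set F}) m :
  0 \notin S -> 1 \in S -> {in S &, forall x y, x * y \in S} ->
  #|[set x ^+ m | x in S]| = (#|S| %/ gcdn #|S| m)%N.
Proof.
move=> S0 S1 SM; pose H := [set u : {unit F} | val u \in S].
have H_group : group_set H.
  apply/group_setP; split=> [|u v]; rewrite !inE // FinRing.val_unitM.
  exact: SM.
have SE : S = val @: H.
  apply/setP=> x; apply/idP/imsetP=> [xS | [u + ->]]; last by rewrite inE.
  have xU : x \is a GRing.unit by rewrite unitfE; apply: contraNneq S0 => <-.
  by exists (Sub x xU); rewrite ?inE SubK.
have H_cyclic : cyclic (Group H_group) by exact: field_unit_group_cyclic.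
have -> : [set x ^+ m | x in S] = val @: [set (u ^+ m)%g | u in H].
  by rewrite SE -!imset_comp; apply: eq_imset => u /=; rewrite FinRing.val_unitX.
by rewrite SE !(card_imset _ val_inj) (card_image_expg_cyclic m H_cyclic).
Qed.

Lemma pi_d_compB (F : fieldType) q (s t : quad F) :
  pi_d (compB q s t) = pi_d s * pi_d t.
Proof. by case: s => [[[a b] c] d]; case: t => [[[a' b'] c'] d']. Qed.

Lemma inB_pi_a (F : fieldType) q m (t : quad F) :
  inB q m t -> pi_a t = pi_d t ^+ m.
Proof. by case: t => [[[a b] c] d] /= /and5P[_ _ _ _ /andP[_ /eqP]]. Qed.

Lemma inB_pi_d_neq0 (F : fieldType) q m (t : quad F) :
  (0 < m)%N -> inB q m t -> pi_d t != 0.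
Proof.
case: t => [[[a b] c] d] m_gt0 /= /and5P[a_neq0 _ _ _ /andP[_ /eqP dE]].
by apply: contraNneq a_neq0 => d0; rewrite -dE d0 expr0n eqn0Ngt m_gt0.
Qed.

Lemma divn_expSn_gt0 q n : (0 < q)%N -> (0 < n)%N -> (0 < (q ^ n + 1) %/ (q + 1))%N.
Proof.
move=> q_gt0; case: n => // n _.
by rewrite divn_gt0 ?addn1 // ltnS expnS leq_pmulr // expn_gt0 q_gt0.
Qed.

Theorem lemma3p3 (p k q n m : nat) (F : finFieldType) (G : {set quad F}) :
  prime p -> (0 < k)%N -> q = (p ^ k)%N -> odd n ->
  #|F| = (q ^ (2 * n))%N ->
  m = ((q ^ n + 1) %/ (q + 1))%N ->
  isBsubgroup q m G ->
  let G0 := [set pi_d t | t in G] in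
  let G1 := [set pi_a t | t in G] in
  G1 = [set d ^+ m | d in G0] /\
  #|G1| = (#|G0| %/ gcdn #|G0| m)%N.
Proof.
move=> p_prime _ qE n_odd _ mE [inG idG compG _] G0 G1.
have m_gt0 : (0 < m)%N.
  by rewrite mE divn_expSn_gt0 ?(odd_gt0 n_odd) // qE expn_gt0 prime_gt0.
have G1E : G1 = [set d ^+ m | d in G0].
  by rewrite -imset_comp; apply: eq_in_imset => t /inG /inB_pi_a.
split=> //; rewrite G1E card_image_expr //.
- by apply/imsetP=> -[t /inG /(inB_pi_d_neq0 m_gt0) + dE]; rewrite -dE eqxx.
- exact: imset_f idG.
- move=> _ _ /imsetP[s sG ->] /imsetP[t tG ->].
  by rewrite -(pi_d_compB q) imset_f ?compG.
Qed.
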